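(* For each $k\in\mathbb N$, the class of bilabelled graphs $\mathcal P_k$ is closed under taking bilabelled minors.
   Context: A $(k,k)$-bilabelled graph is $\boldsymbol F=(F,\boldsymbol u,\boldsymbol v)$, $\boldsymbol u,\boldsymbol v\in V(F)^k$. A bilabelled minor of $\boldsymbol F$ is a $(k,k)$-bilabelled graph obtained from $\boldsymbol F$ by a sequence of edge contractions, edge deletions and deletions of unlabelled vertices (labels remain on their vertices). Series composition $\boldsymbol F\cdot\boldsymbol F'$: disjoint union with $v_i$ identified with $u'_i$, multiple edges removed, labels $(\boldsymbol u,\boldsymbol v')$. Parallel composition $\boldsymbol F\odot\boldsymbol F'$: identify $u_i$ with $u'_i$, $v_i$ with $v'_i$, multiple edges removed. For $\sigma\in\mathfrak S_{2k}$, $\boldsymbol F^\sigma$ has in-labels $(w_{\sigma(1)},\dots,w_{\sigma(k)})$, out-labels $(w_{\sigma(k+1)},\dots,w_{\sigma(2k)})$, $\boldsymbol w=\boldsymbol u\boldsymbol v$. $\mathscr C_k$ = cyclic group of rotations of $(1,\dots,k,2k,\dots,k+1)$. $\boldsymbol C_k$: vertices $[2k]$, in-labels $(1,\dots,k)$, out-labels $(k+1,\dots,2k)$, edges $\{i,i+1\}$ ($i\in[2k]\setminus\{k,2k\}$), $\{1,k+1\},\{k,2k\}$; $\boldsymbol M_k$: same vertices/labels, edges $\{i,i+k\}$. $\mathcal Q_k^P,\mathcal Q_k^S$ = bilabelled minors of $\boldsymbol C_k,\boldsymbol M_k$; $\mathcal Q_k$ their union. $\mathcal P_k$ = smallest class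 containing $\mathcal Q_k$, closed under series composition, $\boldsymbol F\mapsto\boldsymbol F\odot\boldsymbol Q$ ($\boldsymbol Q\in\mathcal Q_k^P$), and $\boldsymbol F\mapsto\boldsymbol F^\sigma$ ($\sigma\in\mathscr C_k$). *)

From mathcomp Require Import all_boot all_fingroup.
Unset Printing Implicit Defensive.

(** A (k,k)-bilabelled graph: a finite vertex type, an adjacency relation
    (only its symmetric, loop-free part is used, see [edge]), in-labels
    [bin : 'I_k -> V] and out-labels [bout : 'I_k -> V]. *)
Record bgraph (k : nat) : Type := BGraph {
  bvert : finType;
  badj : rel bvert;
  bin : 'I_k -> bvert;
  bout : 'I_k -> bvert }.
Arguments BGraph {k} bvert badj bin bout.
Arguments bvert {k} _.
Arguments badj {k} _ _ _.
Arguments bin {k} _ _.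
Arguments bout {k} _ _.

Definition edge {k} (F : bgraph k) (x y : bvert F) : bool :=
  (x != y) && (badj F x y || badj F y x).

Definition bg_iso {k} (F G : bgraph k) : Prop :=
  exists f : bvert F -> bvert G,
    [/\ bijective f,
        (forall x y, edge G (f x) (f y) = edge F x y),
        (forall i, f (bin F i) = bin G i) &
        (forall i, f (bout F i) = bout G i)].

Definition edge_deletion {k} (F G : bgraph k) : Prop :=
  exists (a b : bvert F), edge F a b /\
  exists f : bvert F -> bvert G,
    [/\ bijective f,
        (forall x y, edge G (f x) (f y) =
           edge F x y && ~~ (((x == a) && (y == b)) || ((x == b) && (y == a)))),
        (forall i, f (bin F i) = bin G i) &
        (forall i, f (bout F i) = bout G i)].

Definition vertex_deletion {k} (F G : bgraph k) : Prop :=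
  exists x : bvert F,
    (forall i, bin F i != x) /\ (forall i, bout F i != x) /\
  exists f : bvert G -> bvert F,
    [/\ injective f,
        (forall y, y != x <-> exists z, f z = y),
        (forall z w, edge F (f z) (f w) = edge G z w),
        (forall i, f (bin G i) = bin F i) &
        (forall i, f (bout G i) = bout F i)].

(** G is (up to isomorphism) obtained from F by contracting the edge ab;
    f is the quotient map identifying exactly a and b; labels move along f;
    multiple edges (and the contracted edge) disappear. *)
Definition edge_contraction {k} (F G : bgraph k) : Prop :=
  exists (a b : bvert F), edge F a b /\
  exists f : bvert F -> bvert G,
    [/\ (forall p, exists x, f x = p),
        f a = f b,
        (forall x y, f x = f y -> x = y \/ ((x = a \/ x = b) /\ (y = a \/ y = b))),
        (forall p q, edge G p q <->
           (p != q /\ exists x y, [/\ f x = p, f y = q & edge F x y])) &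
        ((forall i, bin G i = f (bin F i)) /\
        (forall i, bout G i = f (bout F i)))].

Inductive bminor {k} (F : bgraph k) : bgraph k -> Prop :=
| bminor_refl : bminor F F
| bminor_iso G H : bminor F G -> bg_iso G H -> bminor F H
| bminor_edel G H : bminor F G -> edge_deletion G H -> bminor F H
| bminor_vdel G H : bminor F G -> vertex_deletion G H -> bminor F H
| bminor_contr G H : bminor F G -> edge_contraction G H -> bminor F H.

(** Gluing: G is the quotient of the disjoint union of F and F' by the
    equivalence relation generated by [R] (a relation on the sum type),
    with multiple edges removed (and no loops). *)
Definition glued {k} (F F' G : bgraph k)
    (R : rel (bvert F + bvert F')%type)
    (phi : (bvert F + bvert F')%type -> bvert G) : Prop :=
  [/\ (forall p, exists s, phi s = p),
      (forall s t, phi s = phi t <-> connect R s t) &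
      (forall p q, edge G p q <->
        (p != q /\
         ((exists x y, [/\ phi (inl x) = p, phi (inl y) = q & edge F x y]) \/
          (exists x y, [/\ phi (inr x) = p, phi (inr y) = q & edge F' x y]))))].

Definition series_rel {k} (F F' : bgraph k) : rel (bvert F + bvert F')%type :=
  fun s t => [exists i : 'I_k,
    ((s == inl (bout F i)) && (t == inr (bin F' i))) ||
    ((t == inl (bout F i)) && (s == inr (bin F' i)))].

Definition bseries {k} (F F' G : bgraph k) : Prop :=
  exists phi, [/\ glued F F' G (series_rel F F') phi,
    (forall i, bin G i = phi (inl (bin F i))) &
    (forall i, bout G i = phi (inr (bout F' i)))].

Definition parallel_rel {k} (F F' : bgraph k) : rel (bvert F + bvert F')%type :=
  fun s t => [exists i : 'I_k,
    ((s == inl (bin F i)) && (t == inr (bin F' i))) ||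
    ((t == inl (bin F i)) && (s == inr (bin F' i))) ||
    ((s == inl (bout F i)) && (t == inr (bout F' i))) ||
    ((t == inl (bout F i)) && (s == inr (bout F' i)))].

Definition bparallel {k} (F F' G : bgraph k) : Prop :=
  exists phi, [/\ glued F F' G (parallel_rel F F') phi,
    (forall i, bin G i = phi (inl (bin F i))) &
    (forall i, bout G i = phi (inl (bout F i)))].

(** The label word w = u v, indexed by 'I_(k+k) (0-based). *)
Definition wlab {k} (F : bgraph k) (j : 'I_(k + k)) : bvert F :=
  match split j with inl i => bin F i | inr i => bout F i end.

Definition bperm {k} (F : bgraph k) (s : 'S_(k + k)) (G : bgraph k) : Prop :=
  exists f : bvert F -> bvert G,
    [/\ bijective f,
        (forall x y, edge G (f x) (f y) = edge F x y),
        (forall i, bin G i = f (wlab F (s (lshift k i)))) &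
        (forall i, bout G i = f (wlab F (s (rshift k i))))].

(** The sequence (1,...,k,2k,...,k+1), 0-based: j |-> j for j < k and
    j |-> 3k-1-j for j >= k; it is an involution of [0,2k). *)
Definition cseq (k j : nat) : nat := if j < k then j else 3 * k - 1 - j.

(** Rotations of that cyclic sequence: sigma (s_j) = s_(j+r mod 2k). *)
Definition in_cyclic k (s : 'S_(k + k)) : Prop :=
  exists r : nat, forall j : 'I_(k + k),
    nat_of_ord (s j) = cseq k ((cseq k j + r) %% (k + k)).

(** The bilabelled graphs C_k and M_k (0-based vertices 0..2k-1,
    in-labels 0..k-1, out-labels k..2k-1). *)
Definition Cadj k : rel 'I_(k + k) := fun a b =>
  [|| ((a.+1 == b :> nat) && (b < k)),
      ((k <= a) && (a.+1 == b :> nat)),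
      ((a == 0 :> nat) && (b == k :> nat)) |
      ((a == k.-1 :> nat) && (b == (k + k).-1 :> nat))].

Definition Madj k : rel 'I_(k + k) := fun a b => (a + k == b :> nat).

Definition Ck k : bgraph k :=
  @BGraph k ('I_(k + k) : finType) (Cadj k) (lshift k) (@rshift k k).
Definition Mk k : bgraph k :=
  @BGraph k ('I_(k + k) : finType) (Madj k) (lshift k) (@rshift k k).

Definition QP {k} (F : bgraph k) : Prop := bminor (Ck k) F.
Definition QS {k} (F : bgraph k) : Prop := bminor (Mk k) F.

Inductive Pk {k} : bgraph k -> Prop :=
| Pk_Q F : QP F \/ QS F -> Pk F
| Pk_series F F' G : Pk F -> Pk F' -> bseries F F' G -> Pk G
| Pk_parallel F Q G : Pk F -> QP Q -> bparallel F Q G -> Pk G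
| Pk_perm F s G : Pk F -> in_cyclic k s -> bperm F s G -> Pk G.

(* Call F good ([minors_Pk F]) when all bilabelled minors of F lie in P_k; it
   suffices to show that good graphs are closed under the four rules generating
   P_k.  For each rule, the graphs it builds from good pieces are stable under a
   single minor step.  Minor steps commute with the relabelling by sigma.  Every
   edge of a series or parallel composition comes from an edge of a piece, so an
   isomorphism, an edge deletion or a contraction of the composition is carried
   out inside a piece, and so is the deletion of an unlabelled vertex w, with two
   exceptions.  In a parallel composition of F with Q in Q_k^P, w cannot come
   from Q, since every vertex of Q is a label.  In a series composition, w may be
   the class of glued labels v_i = u'_i; then we remove the edges at w and merge w
   into the class of a label of F whose position is adjacent in C_k to a label
   lying in w.  This merge is a parallel composition of F with a minor of C_k, so
   it keeps F good. *)

From mathcomp Require Import all_boot all_fingroup zify.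

Set Implicit Arguments.
Unset Strict Implicit.
Unset Printing Implicit Defensive.

Lemma connect_homo (T T' : finType) (R : rel T) (R' : rel T') (g : T -> T') :
  (forall s t, R s t -> R' (g s) (g t)) ->
  forall s t, connect R s t -> connect R' (g s) (g t).
Proof.
move=> hR s t /connectP [p pth ->]; elim: p s pth => [|a p IH] s /=.
  by move=> _; exact: connect0.
by case/andP=> Rsa pth; exact: connect_trans (connect1 (hR _ _ Rsa)) (IH _ pth).
Qed.

Lemma connect_invariant (T : finType) (T' : Type) (R : rel T) (h : T -> T') :
  (forall s t, R s t -> h s = h t) -> forall s t, connect R s t -> h s = h t.
Proof.
move=> hR s t /connectP [p pth ->]; elim: p s pth => [|a p IH] s //=.
by case/andP=> Rsa pth; rewrite (hR _ _ Rsa) (IH _ pth).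
Qed.

Lemma connect_isolated (T : finType) (R : rel T) z s :
  (forall t, ~~ R t z) -> connect R s z -> s = z.
Proof.
move=> nRz /connectP [p]; case/lastP: p => [_ -> // | p x].
by rewrite rcons_path last_rcons => /andP [_ Rxz] xz; rewrite -xz (negbTE (nRz _)) in Rxz.
Qed.

Lemma connect_pull (S T : finType) (e : S -> T) (R : rel T) : injective e ->
  (forall a b, R a b -> (a \in codom e) && (b \in codom e)) ->
  forall s t, connect R (e s) (e t) = connect (fun x y => R (e x) (e y)) s t.
Proof.
move=> einj Re s t; apply/idP/idP; last exact: connect_homo.
pose r a := odflt s [pick x | e x == a].
have rK x : r (e x) = x.
  by rewrite /r; case: pickP => [x' /eqP /einj -> // | /(_ x)]; rewrite eqxx.
move=> c; rewrite -[s]rK -[t]rK; apply: connect_homo c => a b Rab.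
by case/andP: (Re a b Rab) => /codomP [a' ea] /codomP [b' eb]; subst a b; rewrite !rK.
Qed.

Lemma nat_pred_flip (P : pred nat) a b :
  a <= b -> P a != P b -> exists2 n, a <= n < b & P n != P n.+1.
Proof.
elim: b => [|b IH]; first by rewrite leqn0 => /eqP ->; rewrite eqxx.
rewrite leq_eqVlt ltnS => /orP [/eqP -> | leab]; first by rewrite eqxx.
have [/eqP Pab | nPab] := boolP (P a == P b) => flip.
  by exists b; [rewrite leab ltnSn | rewrite -Pab].
have [n /andP [an nb] Pn] := IH leab nPab.
by exists n => //; rewrite an ltnS ltnW.
Qed.

Definition sum_map (A A' B B' : Type) (f1 : A -> A') (f2 : B -> B') (s : A + B) :
    A' + B' :=
  match s with inl a => inl (f1 a) | inr b => inr (f2 b) end.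

Definition sum_swap (A B : Type) (s : A + B) : B + A :=
  match s with inl a => inr a | inr b => inl b end.
Arguments sum_swap {A B} s.

Lemma sum_map_inj (A A' B B' : Type) (f1 : A -> A') (f2 : B -> B') :
  injective f1 -> injective f2 -> injective (sum_map f1 f2).
Proof. by move=> i1 i2 [a | b] [a' | b'] //= [] => [/i1 | /i2] ->. Qed.

Lemma sum_swapK (A B : Type) : cancel (@sum_swap A B) sum_swap.
Proof. by case. Qed.

Lemma eq_inl (A B : eqType) (a a' : A) : (inl a == inl a' :> A + B) = (a == a').
Proof. by []. Qed.
Lemma eq_inr (A B : eqType) (b b' : B) : (inr b == inr b' :> A + B) = (b == b').
Proof. by []. Qed.
Lemma eq_inlr (A B : eqType) (a : A) (b : B) : (inl a == inr b :> A + B) = false.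
Proof. by []. Qed.
Lemma eq_inrl (A B : eqType) (a : A) (b : B) : (inr b == inl a :> A + B) = false.
Proof. by []. Qed.
Definition sum_eqsE := (eq_inl, eq_inr, eq_inlr, eq_inrl).

Definition same_pair (T : eqType) (a b x y : T) :=
  ((x == a) && (y == b)) || ((x == b) && (y == a)).

Lemma same_pair_sym (T : eqType) (a b x y : T) : same_pair a b x y = same_pair a b y x.
Proof. by rewrite /same_pair orbC andbC [(y == b) && _]andbC. Qed.

(* [series_rel F F'] is [label_rel (bout F) (bin F')] by definition, and
   [parallel_rel F F'] is [label_rel (wlab F) (wlab F')] (see [parallel_label_rel]). *)
Definition label_rel (I : finType) (A B : eqType) (l1 : I -> A) (l2 : I -> B) :
    rel (A + B) := fun s t =>
  [exists i, ((s == inl (l1 i)) && (t == inr (l2 i))) ||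
             ((t == inl (l1 i)) && (s == inr (l2 i)))].

Section LabelRel.
Variables (I : finType) (A B : eqType) (l1 : I -> A) (l2 : I -> B).

Lemma label_relP i :
  label_rel l1 l2 (inl (l1 i)) (inr (l2 i)) /\ label_rel l1 l2 (inr (l2 i)) (inl (l1 i)).
Proof. by split; apply/existsP; exists i; rewrite !eqxx ?orbT. Qed.

Lemma label_rel_free z t : (forall i, l1 i != z) ->
  ~~ label_rel l1 l2 (inl z) t /\ ~~ label_rel l1 l2 t (inl z).
Proof.
move=> nz; split; apply/existsP => -[i]; case: t => v /=;
  by rewrite ?sum_eqsE ?(eq_sym z) ?(negbTE (nz i)) ?andbF.
Qed.

Lemma label_rel_swap s t :
  label_rel l1 l2 (sum_swap s) (sum_swap t) = label_rel l2 l1 s t.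
Proof.
by apply: eq_existsb => i; case: s; case: t => * /=; rewrite ?sum_eqsE ?andbF ?orbF // andbC.
Qed.

Variables (A' B' : eqType) (f1 : A -> A') (f2 : B -> B').

Lemma label_rel_map s t : label_rel l1 l2 s t ->
  label_rel (f1 \o l1) (f2 \o l2) (sum_map f1 f2 s) (sum_map f1 f2 t).
Proof.
by case/existsP=> i /orP [] /andP [/eqP -> /eqP ->]; apply/existsP; exists i;
  rewrite /= !eqxx ?orbT.
Qed.

Lemma label_rel_mapP s' t' : label_rel (f1 \o l1) (f2 \o l2) s' t' ->
  exists s t, [/\ sum_map f1 f2 s = s', sum_map f1 f2 t = t' & label_rel l1 l2 s t].
Proof.
case/existsP=> i /orP [] /andP [/eqP -> /eqP ->];
  [exists (inl (l1 i)), (inr (l2 i)) | exists (inr (l2 i)), (inl (l1 i))];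
  by split => //; case: (label_relP i).
Qed.

End LabelRel.

Lemma label_rel_eq (I : finType) (A B : eqType) (l1 l1' : I -> A) (l2 l2' : I -> B) :
  l1 =1 l1' -> l2 =1 l2' -> label_rel l1 l2 =2 label_rel l1' l2'.
Proof. by move=> e1 e2 s t; apply: eq_existsb => i; rewrite e1 e2. Qed.

Lemma label_rel_pull (I : finType) (A B A' : eqType) (f : A' -> A)
    (l1 : I -> A) (l2 : I -> B) (l1' : I -> A') s t :
  injective f -> (forall i, f (l1' i) = l1 i) ->
  label_rel l1 l2 (sum_map f id s) (sum_map f id t) = label_rel l1' l2 s t.
Proof.
move=> finj e; apply: eq_existsb => i; rewrite -e.
by case: s => v; case: t => w /=; rewrite ?sum_eqsE ?(inj_eq finj).
Qed.

Section BilabelledGraphs.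
Variable k : nat.
Implicit Types F G H Q X Y : bgraph k.

Lemma edge_sym F x y : edge F x y = edge F y x.
Proof. by rewrite /edge eq_sym orbC. Qed.

Lemma edge_neq F x y : edge F x y -> x != y.
Proof. by case/andP. Qed.

Lemma wlab_lshift F i : wlab F (lshift k i) = bin F i.
Proof. by rewrite /wlab (unsplitK (inl i)). Qed.

Lemma wlab_rshift F i : wlab F (rshift k i) = bout F i.
Proof. by rewrite /wlab (unsplitK (inr i)). Qed.

Lemma wlab_eq F (h : 'I_(k + k) -> bvert F) :
  (forall i, bin F i = h (lshift k i)) -> (forall i, bout F i = h (rshift k i)) ->
  forall j, wlab F j = h j.
Proof.
move=> hi ho j; rewrite -[j]splitK.
by case: (split j) => i; rewrite /= ?wlab_lshift ?wlab_rshift.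
Qed.

Lemma wlab_morph F G (f : bvert F -> bvert G) :
  (forall i, f (bin F i) = bin G i) -> (forall i, f (bout F i) = bout G i) ->
  forall j, f (wlab F j) = wlab G j.
Proof.
move=> hi ho j; symmetry; apply: (wlab_eq (h := f \o wlab F)) => i /=;
  by rewrite ?wlab_lshift ?wlab_rshift.
Qed.

Lemma wlab_ind F (P : bvert F -> Prop) :
  (forall i, P (bin F i)) -> (forall i, P (bout F i)) -> forall j, P (wlab F j).
Proof. by move=> hi ho j; rewrite /wlab; case: split. Qed.

Lemma bminor_trans F G H : bminor F G -> bminor G H -> bminor F H.
Proof.
move=> FG; elim=> // [X Y _ FY e|X Y _ FY e|X Y _ FY e|X Y _ FY e].
- exact: bminor_iso FY e.
- exact: bminor_edel FY e.
- exact: bminor_vdel FY e.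
- exact: bminor_contr FY e.
Qed.

Definition restrict F (keep : rel (bvert F)) : bgraph k :=
  BGraph (bvert F) (fun x y => badj F x y && keep x y && keep y x) (bin F) (bout F).
Arguments restrict : clear implicits.

Lemma edge_restrict F keep x y :
  edge (restrict F keep) x y = edge F x y && keep x y && keep y x.
Proof.
rewrite /edge /=; case: (x != y) => //=.
by case: (badj F x y); case: (badj F y x); case: (keep x y); case: (keep y x).
Qed.

Lemma wlab_restrict F keep : wlab (restrict F keep) =1 wlab F.
Proof. by move=> j; rewrite /wlab; case: split. Qed.

Lemma edge_deletion_restrict F keep a b :
  edge F a b -> ~~ (keep a b && keep b a) ->
  edge_deletion (restrict F (fun x y => keep x y || same_pair a b x y)) (restrict F keep).
Proof.
move=> eab nk; exists a, b; split; first by rewrite edge_restrict eab /same_pair !eqxx !orbT.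
exists id; split => //; first by exists id.
move=> x y; rewrite !edge_restrict (same_pair_sym a b y) -/(same_pair a b x y).
case: (boolP (same_pair a b x y)) => [/orP [] /andP [/eqP -> /eqP ->] | _];
  last by rewrite /= !orbF andbT.
all: rewrite /= andbF.
all: by move: nk; rewrite negb_and => /orP [] /negbTE ->; rewrite ?andbF.
Qed.

Lemma restrict_minor F keep : bminor F (restrict F keep).
Proof.
pose dropped kp := [set p : bvert F * bvert F | edge F p.1 p.2 && ~~ (kp p.1 p.2 && kp p.2 p.1)].
have [n] := ubnP #|dropped keep|; elim: n keep => // n IH keep.
rewrite ltnS => small.
case: (set_0Vmem (dropped keep)) => [D0 | [[a b]]].
  apply: (bminor_iso _ _ _ (bminor_refl F)); exists id; split => //; first by exists id.
  move=> x y; rewrite edge_restrict; case E: (edge F x y) => //=.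
  by apply/negPn/negP => nk; have := in_set0 (x, y); rewrite -D0 inE /= E nk.
rewrite inE /= => /andP [eab nk].
apply: (bminor_edel _ _ _ _ (edge_deletion_restrict eab nk)); apply: IH.
apply: leq_trans small; apply: proper_card; apply/properP; split.
  apply/subsetP => -[x y]; rewrite !inE /= => /andP [-> /=].
  by apply: contra => /andP [-> ->].
by exists (a, b); rewrite inE /= ?eab ?nk // /same_pair !eqxx !orbT.
Qed.

(* The quotient part of [edge_contraction], without requiring that [a b] be an edge. *)
Definition identifies G H (a b : bvert G) (g : bvert G -> bvert H) :=
  [/\ (forall p, exists x, g x = p), g a = g b,
      (forall x y, g x = g y -> x = y \/ ((x = a \/ x = b) /\ (y = a \/ y = b))) &
      (forall p q, edge H p q <->
         p != q /\ exists x y, [/\ g x = p, g y = q & edge G x y])].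
Arguments identifies : clear implicits.

Definition cmap F (x y : bvert F) (hxy : x != y) (v : bvert F) : {v : bvert F | v != y} :=
  insubd (exist _ x hxy) v.

Section Contraction.
Variables (F : bgraph k) (x y : bvert F) (hxy : x != y).

Lemma val_cmap v : val (cmap hxy v) = if v != y then v else x.
Proof. by rewrite /cmap val_insubd. Qed.

Lemma cmap_val : cancel val (cmap hxy).
Proof. by move=> u; apply: val_inj; rewrite val_cmap; case: u => /= v ->. Qed.

Lemma cmap_hval (T : Type) (h : bvert F -> T) v :
  h x = h y -> h (val (cmap hxy v)) = h v.
Proof. by move=> hE; rewrite val_cmap; case: ifP => // /negbFE /eqP ->. Qed.

Definition contract : bgraph k :=
  @BGraph k {v : bvert F | v != y}
    (fun u v => [exists a, exists b,
                   (cmap hxy a == u) && (cmap hxy b == v) && edge F a b])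
    (cmap hxy \o bin F) (cmap hxy \o bout F).

Lemma edge_contract u v : edge contract u v <->
  u != v /\ exists a b, [/\ cmap hxy a = u, cmap hxy b = v & edge F a b].
Proof.
rewrite [edge contract _ _]/edge /=; split.
  case/andP=> -> /orP [] /existsP [a] /existsP [b] /andP [/andP [/eqP <- /eqP <-] e].
    by split => //; exists a, b.
  by split => //; exists b, a; rewrite edge_sym.
case=> -> [a [b [<- <- e]]] /=; apply/orP; left.
by apply/existsP; exists a; apply/existsP; exists b; rewrite !eqxx.
Qed.

Lemma contract_identifies : identifies F contract x y (cmap hxy).
Proof.
split; last exact: edge_contract.
- by move=> p; exists (val p); exact: cmap_val.
- by apply: val_inj; rewrite !val_cmap hxy eqxx.
move=> a b /(congr1 val); rewrite !val_cmap.
case: (boolP (a != y)) => ha; case: (boolP (b != y)) => hb; try by left.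
- by move: hb; rewrite negbK => /eqP -> ->; right; tauto.
- by move: ha; rewrite negbK => /eqP -> <-; right; tauto.
- by move: ha hb; rewrite !negbK => /eqP -> /eqP ->; left.
Qed.

Lemma contraction_contract : edge F x y -> edge_contraction F contract.
Proof.
move=> exy; have [? ? ? ?] := contract_identifies.
by exists x, y; split => //; exists (cmap hxy).
Qed.

Lemma wlab_contract j : wlab contract j = cmap hxy (wlab F j).
Proof. by rewrite /wlab; case: split. Qed.

Lemma bminor_contract : edge F x y -> bminor F contract.
Proof. by move=> exy; exact: bminor_contr _ _ _ (bminor_refl F) (contraction_contract exy). Qed.

End Contraction.

Section VertexDeletion.
Variables (F : bgraph k) (z : bvert F).
Hypotheses (hi : forall i, bin F i != z) (ho : forall i, bout F i != z).

Definition del_vertex : bgraph k :=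
  @BGraph k {v : bvert F | v != z} (fun u v => badj F (val u) (val v))
    (fun i => exist _ (bin F i) (hi i)) (fun i => exist _ (bout F i) (ho i)).

Lemma edge_del_vertex u v : edge del_vertex u v = edge F (val u) (val v).
Proof. by rewrite /edge /= val_eqE. Qed.

Lemma vertex_deletion_del_vertex : vertex_deletion F del_vertex.
Proof.
exists z; do 2 split => //; exists val; split => //; first exact: val_inj.
by move=> v; split => [nz | [u <-]]; [exists (exist _ v nz) | exact: (valP u)].
Qed.

Lemma bminor_del_vertex : bminor F del_vertex.
Proof. exact: bminor_vdel _ _ _ (bminor_refl F) vertex_deletion_del_vertex. Qed.

Lemma wlab_del_vertex j : val (wlab del_vertex j) = wlab F j.
Proof. by rewrite /wlab; case: split. Qed.

End VertexDeletion.

Lemma QP_labelled Q : QP Q -> forall v : bvert Q, exists j, v = wlab Q j.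
Proof.
elim=> [|X Y _ IH e|X Y _ IH e|X Y _ IH e|X Y _ IH e] v.
- exists v; rewrite (@wlab_eq (Ck k) id) //.
- case: e => f [[g fK gK] _ fi fo].
  by have [j hj] := IH (g v); exists j; rewrite -(wlab_morph fi fo) -hj gK.
- case: e => a [b [_ [f [[g fK gK] _ fi fo]]]].
  by have [j hj] := IH (g v); exists j; rewrite -(wlab_morph fi fo) -hj gK.
- case: e => x [_ [_ [f [finj _ _ fi fo]]]].
  by have [j hj] := IH (f v); exists j; apply: finj; rewrite (wlab_morph fi fo).
- case: e => a [b [_ [f [fsurj _ _ _ [fi fo]]]]].
  have [u <-] := fsurj v; have [j ->] := IH u; exists j.
  by apply: wlab_morph => i; rewrite ?fi ?fo.
Qed.

End BilabelledGraphs.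
Arguments restrict {k} F keep.
Arguments identifies {k} G H a b g.

Section CycleGraph.
Variable k : nat.

Lemma cseq_lt n : n < k + k -> cseq k n < k + k.
Proof. by rewrite /cseq; case: (ltnP n k); lia. Qed.

Lemma cseqK n : n < k + k -> cseq k (cseq k n) = n.
Proof. rewrite /cseq; case: (ltnP n k) => [-> // | le lt]; case: ltnP; lia. Qed.

Lemma Ck_edge_cseq (u v : 'I_(k + k)) n :
  n.+1 < k + k -> val u = cseq k n -> val v = cseq k n.+1 -> edge (Ck k) u v.
Proof.
case: u v => [u ?] [v ?]; rewrite /edge /= -val_eqE /Cadj /cseq /= => lt.
case: (ltnP n.+1 k) => [lt1 | le1]; first rewrite (ltnW lt1).
  by move=> -> ->; lia.
case: (ltnP n k) => [lt2 | le2] -> ->.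
  have -> : n = k.-1 by lia.
  have -> : 3 * k - 1 - k.-1.+1 = (k + k).-1 by lia.
  by rewrite !eqxx !orbT andbT; lia.
apply/andP; split; first lia.
by apply/orP; right; apply/orP; right; apply/orP; left; lia.
Qed.

(* [cseq] lists the vertices of C_k along a Hamiltonian cycle. *)
Lemma Ck_cut_edge (P : pred 'I_(k + k)) u v :
  P u -> ~~ P v -> exists x y, [/\ edge (Ck k) x y, P x & ~~ P y].
Proof.
move=> Pu nPv; pose vert n : 'I_(k + k) := insubd u (cseq k n).
have vertE n : n < k + k -> val (vert n) = cseq k n.
  by move=> lt; rewrite val_insubd cseq_lt.
have vertK (j : 'I_(k + k)) : vert (cseq k j) = j.
  by apply: val_inj; rewrite vertE ?cseqK ?cseq_lt.
have flip : (P \o vert) (cseq k u) != (P \o vert) (cseq k v).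
  by rewrite /= !vertK Pu (negbTE nPv).
have [n lt Pn] : exists2 n, n.+1 < k + k & P (vert n) != P (vert n.+1).
  have [le | lt] := leqP (cseq k u) (cseq k v).
    have [n /andP [_ nlt] Pn] := nat_pred_flip le flip.
    by exists n => //; exact: leq_ltn_trans nlt (cseq_lt (ltn_ord v)).
  rewrite eq_sym in flip; have [n /andP [_ nlt] Pn] := nat_pred_flip (ltnW lt) flip.
  by exists n => //; exact: leq_ltn_trans nlt (cseq_lt (ltn_ord u)).
have e := Ck_edge_cseq lt (vertE n (ltnW lt)) (vertE n.+1 lt).
move: Pn; case Pv: (P (vert n)); case Pw: (P (vert n.+1)) => // _.
  by exists (vert n), (vert n.+1); rewrite Pv Pw.
by exists (vert n.+1), (vert n); rewrite edge_sym Pv Pw.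
Qed.

End CycleGraph.

Section CycleMerge.
Variables (k : nat) (u v : 'I_(k + k)).
Hypothesis huv : edge (Ck k) u v.

Lemma Ck_pair_edge : edge (restrict (Ck k) (same_pair u v)) v u.
Proof. by rewrite edge_restrict edge_sym huv /same_pair !eqxx !orbT. Qed.

(* An edgeless member of Q_k^P whose only identification of labels is u ~ v. *)
Definition Ck_merge : bgraph k := contract (edge_neq Ck_pair_edge).

Lemma QP_Ck_merge : QP Ck_merge.
Proof. exact: bminor_trans (restrict_minor _) (bminor_contract _ Ck_pair_edge). Qed.

Lemma wlab_Ck_merge j : wlab Ck_merge j = cmap (edge_neq Ck_pair_edge) j.
Proof. by rewrite wlab_contract wlab_restrict (@wlab_eq _ (Ck k) id). Qed.

Lemma Ck_merge_edgeless p q : ~~ edge Ck_merge p q.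
Proof.
have [_ cmap_vu _ _] := contract_identifies (edge_neq Ck_pair_edge).
apply/negP => /(@edge_contract _ _ _ _ (edge_neq Ck_pair_edge) _ _) [npq [a [b [ap bq]]]].
rewrite edge_restrict /same_pair => /andP [/andP [_ /orP [] /andP [/eqP au /eqP bv]] _];
  by move: npq; rewrite -ap -bq au bv cmap_vu eqxx.
Qed.

End CycleMerge.

Section Gluing.
Variable k : nat.
Implicit Types F G H X Y : bgraph k.

Lemma glued_eqR F F' G R R' phi :
  R =2 R' -> glued F F' G R phi -> glued F F' G R' phi.
Proof. by move=> e [surj ker E]; split => // s t; rewrite -(eq_connect e). Qed.

Lemma glued_eq_map F F' G R phi phi' :
  phi =1 phi' -> glued F F' G R phi -> glued F F' G R phi'.
Proof.
move=> e [surj ker E]; split.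
- by move=> p; have [s <-] := surj p; exists s.
- by move=> s t; rewrite -!e.
- move=> p q; rewrite E; split=> -[npq h]; split => //.
    by case: h => -[x [y [ex ey exy]]]; [left | right]; exists x, y; rewrite -!e.
  by case: h => -[x [y [ex ey exy]]]; [left | right]; exists x, y; rewrite !e.
Qed.

Lemma glued_swap (I : finType) F F' G (l1 : I -> bvert F) (l2 : I -> bvert F') phi :
  glued F F' G (label_rel l1 l2) phi -> glued F' F G (label_rel l2 l1) (phi \o sum_swap).
Proof.
case=> surj ker E; split.
- by move=> p; have [s <-] := surj p; exists (sum_swap s); rewrite /= sum_swapK.
- move=> s t; rewrite /= ker; split => [c | ].
    rewrite -(sum_swapK s) -(sum_swapK t); apply: connect_homo c => a b.
    by rewrite label_rel_swap.
  by apply: connect_homo => a b; rewrite label_rel_swap.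
- by move=> p q; rewrite E; split=> -[npq h]; split => //; case: h; [right | left | right | left].
Qed.

Lemma glued_iso F F' G H R phi (f : bvert G -> bvert H) :
  glued F F' G R phi -> bijective f ->
  (forall x y, edge H (f x) (f y) = edge G x y) -> glued F F' H R (f \o phi).
Proof.
case=> surj ker E [g fK gK] fE; have finj := can_inj fK; split.
- by move=> p; have [s sp] := surj (g p); exists s; rewrite /= sp gK.
- by move=> s t; rewrite -ker; split => [/finj | /= ->].
- move=> p q; rewrite -[p]gK -[q]gK fE E (inj_eq finj).
  split=> -[npq [] [x [y [ex ey exy]]]]; split => //.
  + by left; exists x, y; rewrite /= ex ey.
  + by right; exists x, y; rewrite /= ex ey.
  + by left; exists x, y; split => //; apply: finj.
  + by right; exists x, y; split => //; apply: finj.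
Qed.

Lemma glued_restrict F F' X R phi (keep : rel (bvert X)) :
  glued F F' X R phi ->
  glued (restrict F (fun x y => keep (phi (inl x)) (phi (inl y))))
        (restrict F' (fun x y => keep (phi (inr x)) (phi (inr y))))
        (restrict X keep) R phi.
Proof.
case=> surj ker E; split => // p q; rewrite edge_restrict; split.
  case/andP=> /andP [/E [npq h] kpq] kqp; split => //.
  case: h => -[x [y [ex ey exy]]]; [left | right]; exists x, y;
    by rewrite edge_restrict exy ex ey kpq kqp.
case=> npq [] [x [y [px qy]]]; subst p q;
  rewrite edge_restrict => /andP [/andP [exy -> ->]]; rewrite !andbT; apply/E; split => //.
- by left; exists x, y.
- by right; exists x, y.
Qed.

Lemma glued_edge_deletion F F' X Y R phi a b (f : bvert X -> bvert Y) :
  glued F F' X R phi -> bijective f ->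
  (forall x y, edge Y (f x) (f y) = edge X x y && ~~ same_pair a b x y) ->
  glued (restrict F (fun x y => ~~ same_pair a b (phi (inl x)) (phi (inl y))))
        (restrict F' (fun x y => ~~ same_pair a b (phi (inr x)) (phi (inr y))))
        Y R (f \o phi).
Proof.
move=> gl fbij fE.
apply: glued_iso (glued_restrict (fun p q => ~~ same_pair a b p q) gl) fbij _ => x y.
by rewrite fE edge_restrict (same_pair_sym a b y) -andbA andbb.
Qed.

Lemma glued_del_vertexL (I : finType) F F' X Y (l1 : I -> bvert F) (l2 : I -> bvert F')
    phi (z : bvert F) (hi : forall i, bin F i != z) (ho : forall i, bout F i != z)
    (l1' : I -> bvert (del_vertex hi ho)) (f : bvert Y -> bvert X) :
  glued F F' X (label_rel l1 l2) phi -> (forall i, val (l1' i) = l1 i) ->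
  injective f -> (forall p, p != phi (inl z) <-> exists u, f u = p) ->
  (forall u v, edge X (f u) (f v) = edge Y u v) ->
  exists2 psi, glued (del_vertex hi ho) F' Y (label_rel l1' l2) psi &
               forall s, f (psi s) = phi (sum_map val id s).
Proof.
case=> surj ker E l1E finj frange fE; set D := del_vertex hi ho.
pose emb : bvert D + bvert F' -> bvert F + bvert F' := sum_map val id.
have Rz t : ~~ label_rel l1 l2 (inl z) t /\ ~~ label_rel l1 l2 t (inl z).
  by apply: label_rel_free => i; rewrite -l1E; exact: valP (l1' i).
have onto x : x != inl z -> x \in codom emb.
  case: x => [v | b] vz; apply/codomP; last by exists (inr b).
  have nz : v != z by apply: contraNneq vz => ->.
  by exists (inl (exist _ v nz)).
have zX p : f p != phi (inl z) by apply/(frange _).2; exists p.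
have away s : phi (emb s) != phi (inl z).
  apply/eqP => /ker /(connect_isolated (fun t => (Rz t).2)).
  by case: s => [[v nz] | b] //= [vz]; rewrite vz eqxx in nz.
have [psi fpsi] : exists psi : bvert D + bvert F' -> bvert Y,
    forall s, f (psi s) = phi (emb s).
  have ex s : exists u, f u == phi (emb s) by have [u <-] := (frange _).1 (away s); exists u.
  by exists (fun s => xchoose (ex s)) => s; apply/eqP/(xchooseP (ex s)).
have notz (v : bvert F) p : phi (inl v) = f p -> v != z.
  by move=> vp; apply: contraNneq (zX p) => vz; rewrite -vp vz.
exists psi => //; split.
- move=> p; have [x px] := surj (f p).
  have [x' xe] : exists x', x = emb x'.
    by apply/codomP/onto; apply: contraNneq (zX p) => xz; rewrite -px xz.
  by exists x'; apply: finj; rewrite fpsi -xe.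
- have pull : (fun s t => label_rel l1 l2 (emb s) (emb t)) =2 label_rel l1' l2.
    by move=> s t; exact: label_rel_pull val_inj l1E.
  move=> s t; rewrite -(eq_connect pull).
  rewrite -(connect_pull (sum_map_inj val_inj (@inj_id _))) -?ker; last first.
    move=> a b Rab; rewrite !onto //.
    + by apply: contraNneq (Rz a).2 => <-.
    + by apply: contraNneq (Rz b).1 => <-.
  by split => [/(congr1 f) | e]; [rewrite !fpsi | apply: finj; rewrite !fpsi].
- move=> p q; rewrite -fE E (inj_eq finj); split.
    case=> npq [[x [y [ex ey exy]]] | [x [y [ex ey exy]]]]; split => //.
      left; exists (exist _ x (notz x p ex)), (exist _ y (notz y q ey)).
      by split; [apply: finj; rewrite fpsi | apply: finj; rewrite fpsi | rewrite edge_del_vertex].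
    by right; exists x, y; split => //; apply: finj; rewrite fpsi.
  case=> npq [[u [v [up vq euv]]] | [x [y [xp yq exy]]]]; subst p q; split => //.
    by left; exists (val u), (val v); rewrite !fpsi -edge_del_vertex.
  by right; exists x, y; rewrite !fpsi.
Qed.

Lemma glued_del_vertexR (I : finType) F F' X Y (l1 : I -> bvert F) (l2 : I -> bvert F')
    phi (z : bvert F') (hi : forall i, bin F' i != z) (ho : forall i, bout F' i != z)
    (l2' : I -> bvert (del_vertex hi ho)) (f : bvert Y -> bvert X) :
  glued F F' X (label_rel l1 l2) phi -> (forall i, val (l2' i) = l2 i) ->
  injective f -> (forall p, p != phi (inr z) <-> exists u, f u = p) ->
  (forall u v, edge X (f u) (f v) = edge Y u v) ->
  exists2 psi, glued F (del_vertex hi ho) Y (label_rel l1 l2') psi &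
               forall s, f (psi s) = phi (sum_map id val s).
Proof.
move=> /glued_swap gl l2E finj frange fE.
have [psi /glued_swap gl' fpsi] := glued_del_vertexL gl l2E finj frange fE.
by exists (psi \o sum_swap) => // -[x | x]; rewrite /= fpsi.
Qed.

Lemma glued_contractL (I : finType) F F' G H (l1 : I -> bvert F) (l2 : I -> bvert F')
    phi x y (hxy : x != y) (g : bvert G -> bvert H) :
  glued F F' G (label_rel l1 l2) phi -> identifies G H (phi (inl x)) (phi (inl y)) g ->
  glued (contract hxy) F' H (label_rel (cmap hxy \o l1) l2) (g \o phi \o sum_map val id).
Proof.
case=> surj ker E [gsurj gxy gker gE].
set R' := label_rel _ l2; pose m := sum_map (cmap hxy) (@id (bvert F')).
have pm s : g (phi (sum_map val id (m s))) = g (phi s).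
  by case: s => [v | b] //=; exact: (cmap_hval hxy (h := fun v => g (phi (inl v))) v gxy).
have hom s t : connect (label_rel l1 l2) s t -> connect R' (m s) (m t).
  by apply: connect_homo => a b; exact: label_rel_map.
have mx : m (inl x) = m (inl y) by rewrite /m /=; case: (contract_identifies hxy) => _ ->.
have toX s : phi s = phi (inl x) \/ phi s = phi (inl y) ->
    connect R' (m s) (m (inl x)) /\ connect R' (m (inl x)) (m s).
  by case=> e; [| rewrite mx]; split; apply: hom; apply/ker; rewrite e.
split.
- by move=> p; have [a <-] := gsurj p; have [s <-] := surj a; exists (m s); exact: pm.
- have msurj s' : exists s, m s = s'.
    by case: s' => [u | b]; [exists (inl (val u)); rewrite /m /= cmap_val | exists (inr b)].
  move=> s' t'; have [s <-] := msurj s'; have [t <-] := msurj t'.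
  rewrite /= !pm; split => [/gker [/ker /hom // | [hs ht]] | c].
    exact: connect_trans (toX s hs).1 (toX t ht).2.
  rewrite -(pm s) -(pm t); apply: (connect_invariant (h := g \o phi \o sum_map val id)) c.
  move=> a' b' /(@label_rel_mapP _ _ _ l1 l2 _ _ (cmap hxy) id) [a [b [<- <- Rab]]].
  by rewrite /= !pm; congr g; apply/ker/connect1.
- move=> p q; rewrite gE /=; split.
    case=> npq [a [b [ap bq /E [nab [[u [v [ua vb euv]]] | [u [v [ua vb euv]]]]]]]];
      subst p q a b; split => //.
      left; exists (cmap hxy u), (cmap hxy v); rewrite (pm (inl u)) (pm (inl v)); split => //.
      apply/(@edge_contract _ _ _ _ hxy _ _); split; last by exists u, v.
      by apply: contraNneq npq => e; rewrite -(pm (inl u)) -(pm (inl v)) /m /= e.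
    by right; exists u, v.
  case=> npq [[u [v [up vq /(@edge_contract _ _ _ _ hxy _ _) [_ [a [b [au bv eab]]]]]]] |
              [u [v [up vq euv]]]]; subst p q; split => //.
    rewrite -au -bv in npq *.
    exists (phi (inl a)), (phi (inl b)); rewrite (pm (inl a)) (pm (inl b)); split => //.
    apply/E; split; last by left; exists a, b.
    by apply: contraNneq npq => e; rewrite (pm (inl a)) (pm (inl b)) e.
  exists (phi (inr u)), (phi (inr v)); split => //; apply/E; split; last by right; exists u, v.
  by apply: contraNneq npq => ->.
Qed.

Lemma glued_contractR (I : finType) F F' G H (l1 : I -> bvert F) (l2 : I -> bvert F')
    phi x y (hxy : x != y) (g : bvert G -> bvert H) :
  glued F F' G (label_rel l1 l2) phi -> identifies G H (phi (inr x)) (phi (inr y)) g ->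
  glued F (contract hxy) H (label_rel l1 (cmap hxy \o l2)) (g \o phi \o sum_map id val).
Proof.
move=> /glued_swap gl gid; move: (glued_contractL hxy gl gid) => /glued_swap.
by apply: glued_eq_map => -[u | u].
Qed.

(* Once its edges are gone, deleting [w] is the same as merging it into any [c]. *)
Lemma deletion_identifies X Y (w c : bvert X) (f : bvert Y -> bvert X) :
  c != w -> injective f -> (forall p, p != w <-> exists u, f u = p) ->
  (forall u v, edge X (f u) (f v) = edge Y u v) ->
  exists2 g, identifies (restrict X (fun p q => (p != w) && (q != w))) Y c w g & cancel f g.
Proof.
move=> cw finj frange fE; have [yc fyc] := (frange c).1 cw.
pose g p := odflt yc [pick u | f u == p].
have gK : cancel f g.
  by move=> u; rewrite /g; case: pickP => [u' /eqP /finj -> // | /(_ u)]; rewrite eqxx.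
have gw : g w = yc.
  rewrite /g; case: pickP => // u /eqP fu.
  by have := (frange w).2 (ex_intro _ u fu); rewrite eqxx.
have fg p : p != w -> f (g p) = p by case/(frange p).1 => u <-; rewrite gK.
have fw u : f u != w by apply/(frange _).2; exists u.
exists g => //; split.
- by move=> u; exists (f u); rewrite gK.
- by rewrite -fyc gK gw.
- move=> p q e; case: (eqVneq p w) => [pw | pw]; case: (eqVneq q w) => [qw | qw].
  + by left; rewrite pw qw.
  + by right; split; [right | left]; rewrite // -(fg q qw) -e pw gw fyc.
  + by right; split; [left | right]; rewrite // -(fg p pw) e qw gw fyc.
  + by left; rewrite -(fg p pw) -(fg q qw) e.
- move=> u v; split => [euv | [nuv [p [q [<- <-]]]]].
    split; first exact: edge_neq euv.
    by exists (f u), (f v); rewrite !gK edge_restrict fE euv !fw.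
  by rewrite edge_restrict => /andP [/andP [epq /andP [pw qw] _]]; rewrite -fE !fg.
Qed.

End Gluing.

Section Compositions.
Variable k : nat.
Implicit Types F G Q X Y : bgraph k.

(* [bseries F F' G] is convertible to
   [composed F F' (label_rel (bout F) (bin F')) (inl \o bin F) (inr \o bout F') G]. *)
Definition composed F F' (R : rel (bvert F + bvert F'))
    (lin lout : 'I_k -> bvert F + bvert F') G :=
  exists phi, [/\ glued F F' G R phi, (forall i, bin G i = phi (lin i)) &
                  (forall i, bout G i = phi (lout i))].
Arguments composed : clear implicits.

Lemma composed_eqR F F' R R' lin lout G :
  R =2 R' -> composed F F' R lin lout G -> composed F F' R' lin lout G.
Proof. by move=> e [phi [gl li lo]]; exists phi; split => //; exact: glued_eqR gl. Qed.

Lemma composed_iso F F' R lin lout X Y :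
  composed F F' R lin lout X -> bg_iso X Y -> composed F F' R lin lout Y.
Proof.
case=> phi [gl li lo] [f [fbij fE fi fo]]; exists (f \o phi); split.
- exact: glued_iso gl fbij fE.
- by move=> i; rewrite -fi li.
- by move=> i; rewrite -fo lo.
Qed.

Lemma composed_edge_deletion F F' R lin lout X Y :
  composed F F' R lin lout X -> edge_deletion X Y ->
  exists kl kr, composed (restrict F kl) (restrict F' kr) R lin lout Y.
Proof.
case=> phi [gl li lo] [a [b [_ [f [fbij fE fi fo]]]]].
do 2 eexists; exists (f \o phi); split.
- exact: glued_edge_deletion gl fbij fE.
- by move=> i; rewrite -fi li.
- by move=> i; rewrite -fo lo.
Qed.

Lemma composed_contraction (I : finType) F F' (l1 : I -> bvert F) (l2 : I -> bvert F')
    lin lout X Y :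
  composed F F' (label_rel l1 l2) lin lout X -> edge_contraction X Y ->
  (exists x y (hxy : x != y), edge F x y /\
     composed (contract hxy) F' (label_rel (cmap hxy \o l1) l2)
       (sum_map (cmap hxy) id \o lin) (sum_map (cmap hxy) id \o lout) Y) \/
  (exists x y (hxy : x != y), edge F' x y /\
     composed F (contract hxy) (label_rel l1 (cmap hxy \o l2))
       (sum_map id (cmap hxy) \o lin) (sum_map id (cmap hxy) \o lout) Y).
Proof.
case=> phi [gl li lo] [a [b [eab [g [gsurj gab gker gE [gi go]]]]]].
have gid : identifies X Y a b g by [].
have [_ _ E] := gl.
case/E: eab => _ [[x [y [xa yb exy]]] | [x [y [xa yb exy]]]]; subst a b;
  have hxy := edge_neq exy; [left | right]; exists x, y, hxy; split => //.
- have pm s : g (phi (sum_map val id (sum_map (cmap hxy) id s))) = g (phi s).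
    by case: s => v //=; exact: (cmap_hval hxy (h := fun v => g (phi (inl v))) v gab).
  exists (g \o phi \o sum_map val id); split; first exact: glued_contractL gl gid.
  + by move=> i; rewrite gi li /= pm.
  + by move=> i; rewrite go lo /= pm.
- have pm s : g (phi (sum_map id val (sum_map id (cmap hxy) s))) = g (phi s).
    by case: s => v //=; exact: (cmap_hval hxy (h := fun v => g (phi (inr v))) v gab).
  exists (g \o phi \o sum_map id val); split; first exact: glued_contractR gl gid.
  + by move=> i; rewrite gi li /= pm.
  + by move=> i; rewrite go lo /= pm.
Qed.

End Compositions.
Arguments composed {k} F F' R lin lout G.

Section Parallel.
Variable k : nat.
Implicit Types F G Q X Y : bgraph k.

Lemma parallel_label_rel F F' : parallel_rel F F' =2 label_rel (wlab F) (wlab F').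
Proof.
move=> s t; apply/existsP/existsP => -[i].
  case/orP=> [/orP [/orP [] h | h] | h].
  - by exists (lshift k i); rewrite !wlab_lshift h.
  - by exists (lshift k i); rewrite !wlab_lshift h orbT.
  - by exists (rshift k i); rewrite !wlab_rshift h.
  - by exists (rshift k i); rewrite !wlab_rshift h orbT.
by rewrite /wlab; case: (split i) => j /orP [] h; exists j; rewrite h ?orbT.
Qed.

Lemma contract_labels_parallel F (u v : 'I_(k + k)) (hab : wlab F v != wlab F u) :
  edge (Ck k) u v -> exists2 Q, QP Q & bparallel F Q (contract hab).
Proof.
move=> huv; pose Q := Ck_merge huv; pose hvu := edge_neq (Ck_pair_edge huv).
have [_ cmap_vu _ _] := contract_identifies hvu.
have [_ cmap_ab ker _] := contract_identifies hab.
exists Q; first exact: QP_Ck_merge.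
pose r (s : bvert F + bvert Q) := match s with inl t => t | inr q => wlab F (val q) end.
exists (cmap hab \o r); split => //.
apply: (glued_eqR (R := label_rel (wlab F) (wlab Q))) => [s t | ].
  by rewrite parallel_label_rel.
set R := label_rel (wlab F) (wlab Q).
have toL s : connect R s (inl (r s)) /\ connect R (inl (r s)) s.
  case: s => [t | q]; first by split; exact: connect0.
  have [R1 R2] := label_relP (wlab F) (wlab Q) (val q).
  by rewrite wlab_Ck_merge cmap_val in R1 R2; split; [exact: connect1 R2 | exact: connect1 R1].
have uv : connect R (inl (wlab F v)) (inl (wlab F u)) /\
          connect R (inl (wlab F u)) (inl (wlab F v)).
  have [Ru1 Ru2] := label_relP (wlab F) (wlab Q) u.
  have [Rv1 Rv2] := label_relP (wlab F) (wlab Q) v.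
  rewrite !wlab_Ck_merge -cmap_vu in Ru1 Ru2; rewrite !wlab_Ck_merge in Rv1 Rv2.
  by split; [exact: connect_trans (connect1 Rv1) (connect1 Ru2) |
             exact: connect_trans (connect1 Ru1) (connect1 Rv2)].
split.
- by move=> p; exists (inl (val p)); rewrite /= cmap_val.
- move=> s t; split => [/ker [e | [hs ht]] | ].
    by apply: connect_trans (toL s).1 _; rewrite e; exact: (toL t).2.
  apply: connect_trans (toL s).1 (connect_trans _ (toL t).2).
  by case: hs => ->; case: ht => ->; rewrite ?connect0 //; case: uv.
  apply: (connect_invariant (h := cmap hab \o r)) => a b.
  case/existsP=> j /orP [] /andP [/eqP -> /eqP ->] /=;
    by rewrite wlab_Ck_merge (cmap_hval hvu (h := fun j => cmap hab (wlab F j)) _ cmap_ab).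
- move=> p q; rewrite (@edge_contract _ _ _ _ hab _ _); split => -[npq h]; split => //.
    by left; case: h => a [b [? ? ?]]; exists a, b.
  case: h => -[a [b [ap bq eab]]]; first by exists a, b.
  by case/negP: (Ck_merge_edgeless a b).
Qed.

Lemma bparallelE F Q G : bparallel F Q G <->
  composed F Q (label_rel (wlab F) (wlab Q)) (inl \o bin F) (inl \o bout F) G.
Proof. by split; apply: composed_eqR => s t; rewrite parallel_label_rel. Qed.

Lemma parallel_vertex_deletion F Q X Y : QP Q -> bparallel F Q X -> vertex_deletion X Y ->
  exists2 F', bminor F F' & bparallel F' Q Y.
Proof.
rewrite bparallelE => qQ [phi [gl li lo]] [w [hwi [hwo [f [finj frange fE fi fo]]]]].
have wX j : wlab X j = phi (inl (wlab F j)).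
  apply: (wlab_eq (h := fun j => phi (inl (wlab F j)))) => i;
    by rewrite ?li ?lo ?wlab_lshift ?wlab_rshift.
have wXw j : wlab X j != w by apply: (wlab_ind (P := fun v => v != w)).
have [surj ker _] := gl; have [[z | q] zw] := surj w; last first.
  have [j qj] := QP_labelled qQ q; have [Rj _] := label_relP (wlab F) (wlab Q) j.
  by case/eqP: (wXw j); rewrite wX -zw qj; apply/ker/connect1.
have nz j : wlab F j != z by apply: contraNneq (wXw j) => e; rewrite wX e zw.
have hi i : bin F i != z by rewrite -wlab_lshift.
have ho i : bout F i != z by rewrite -wlab_rshift.
rewrite -zw in frange.
have [psi gl' fpsi] := glued_del_vertexL gl (wlab_del_vertex hi ho) finj frange fE.
exists (del_vertex hi ho); first exact: bminor_del_vertex.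
rewrite bparallelE; exists psi; split => // i; apply: finj; rewrite fpsi ?fi ?fo ?li ?lo //.
Qed.

Lemma parallel_contraction F Q X Y : bparallel F Q X -> edge_contraction X Y ->
  exists F' Q', [/\ bminor F F', bminor Q Q' & bparallel F' Q' Y].
Proof.
rewrite bparallelE => FQX e.
case: (composed_contraction FQX e) => -[x [y [hxy [exy c]]]].
  exists (contract hxy), Q; split; [exact: bminor_contract hxy exy | exact: bminor_refl |].
  rewrite bparallelE; apply: composed_eqR c.
  by apply: label_rel_eq => // j; rewrite wlab_contract.
exists F, (contract hxy); split; [exact: bminor_refl | exact: bminor_contract hxy exy |].
rewrite bparallelE; apply: composed_eqR c.
by apply: label_rel_eq => // j; rewrite wlab_contract.
Qed.

End Parallel.

Section MinorsInPk.
Variable k : nat.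
Implicit Types F G Q X Y : bgraph k.

Definition minors_Pk F := forall G, bminor F G -> Pk G.

Lemma minors_Pk_Pk F : minors_Pk F -> Pk F.
Proof. by apply; exact: bminor_refl. Qed.

Lemma minors_Pk_minor F G : minors_Pk F -> bminor F G -> minors_Pk G.
Proof. by move=> mF FG H GH; apply: mF; exact: bminor_trans FG GH. Qed.

Lemma minors_Pk_Q F : QP F \/ QS F -> minors_Pk F.
Proof.
by move=> hQ G FG; apply: Pk_Q; case: hQ => h; [left | right]; exact: bminor_trans h FG.
Qed.

Lemma minor_stable_minors_Pk (P : bgraph k -> Prop) :
  (forall X, P X -> Pk X) ->
  (forall X Y, P X -> bg_iso X Y -> P Y) ->
  (forall X Y, P X -> edge_deletion X Y -> P Y) ->
  (forall X Y, P X -> vertex_deletion X Y -> P Y) ->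
  (forall X Y, P X -> edge_contraction X Y -> P Y) ->
  forall X, P X -> minors_Pk X.
Proof.
move=> PPk Piso Pedel Pvdel Pcontr X PX Y XY; apply: PPk.
by elim: XY => // G H _ PG e; [exact: Piso PG e | exact: Pedel PG e | exact: Pvdel PG e |
  exact: Pcontr PG e].
Qed.

Lemma minors_Pk_parallel F Q G : minors_Pk F -> QP Q -> bparallel F Q G -> minors_Pk G.
Proof.
move=> mF qQ FQG.
pose P X := exists F Q, [/\ minors_Pk F, QP Q & bparallel F Q X].
apply: (minor_stable_minors_Pk (P := P)); last by exists F, Q.
- by move=> X [F' [Q' [mF' qQ' p]]]; exact: Pk_parallel (minors_Pk_Pk mF') qQ' p.
- by move=> X Y [F' [Q' [mF' qQ' p]]] e; exists F', Q'; split => //; exact: composed_iso p e.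
- move=> X Y [F' [Q' [mF' qQ' p]]] e; have [kl [kr c]] := composed_edge_deletion p e.
  exists (restrict F' kl), (restrict Q' kr); split => //.
    exact: minors_Pk_minor mF' (restrict_minor _).
  exact: bminor_trans qQ' (restrict_minor _).
- move=> X Y [F' [Q' [mF' qQ' p]]] e; have [F'' m p'] := parallel_vertex_deletion qQ' p e.
  by exists F'', Q'; split => //; exact: minors_Pk_minor mF' m.
- move=> X Y [F' [Q' [mF' qQ' p]]] e; have [F'' [Q'' [m1 m2 p']]] := parallel_contraction p e.
  by exists F'', Q''; split => //; [exact: minors_Pk_minor mF' m1 | exact: bminor_trans qQ' m2].
Qed.

End MinorsInPk.

Section Series.
Variable k : nat.
Implicit Types F G Q X Y : bgraph k.

Lemma series_vertex_deletion_glued F1 F2 X Y phi w (f : bvert Y -> bvert X) i0 :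
  minors_Pk F1 -> minors_Pk F2 ->
  glued F1 F2 X (label_rel (bout F1) (bin F2)) phi ->
  (forall i, bin X i = phi (inl (bin F1 i))) -> (forall i, bout X i = phi (inr (bout F2 i))) ->
  (forall i, bin X i != w) -> injective f -> (forall p, p != w <-> exists u, f u = p) ->
  (forall u v, edge X (f u) (f v) = edge Y u v) ->
  (forall i, f (bin Y i) = bin X i) -> (forall i, f (bout Y i) = bout X i) ->
  phi (inl (bout F1 i0)) = w ->
  exists F1' F2', [/\ minors_Pk F1', minors_Pk F2' & bseries F1' F2' Y].
Proof.
move=> mF1 mF2 gl li lo hwi finj frange fE fi fo h0.
pose P j := phi (inl (wlab F1 j)) == w.
have P_out : P (rshift k i0) by rewrite /P wlab_rshift h0.
have P_in : ~~ P (lshift k i0) by rewrite /P wlab_lshift -li hwi.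
have [u [v [huv /eqP Pu nPv]]] := Ck_cut_edge P_out P_in.
pose keep (p q : bvert X) := (p != w) && (q != w).
pose F1' := restrict F1 (fun x y => keep (phi (inl x)) (phi (inl y))).
pose F2' := restrict F2 (fun x y => keep (phi (inr x)) (phi (inr y))).
have gl' : glued F1' F2' (restrict X keep) (label_rel (bout F1') (bin F2')) phi.
  exact: glued_restrict keep gl.
have hab : wlab F1' v != wlab F1' u.
  by rewrite !wlab_restrict; apply: contraNneq nPv => e; rewrite /P e Pu.
have [g gid gK] := deletion_identifies nPv finj frange fE.
have gid' : identifies (restrict X keep) Y (phi (inl (wlab F1' v))) (phi (inl (wlab F1' u))) g.
  by rewrite !wlab_restrict Pu.
have [_ guv _ _] := gid'.
have [Q qQ par] := contract_labels_parallel hab huv.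
exists (contract hab), F2'; split.
- exact: minors_Pk_parallel (minors_Pk_minor mF1 (restrict_minor _)) qQ par.
- exact: minors_Pk_minor mF2 (restrict_minor _).
exists (g \o phi \o sum_map val id); split.
  exact: glued_eqR _ (glued_contractL hab gl' gid').
- move=> i; rewrite -[bin Y i]gK fi li /=.
  by rewrite (cmap_hval hab (h := fun x => g (phi (inl x))) _ guv).
- by move=> i; rewrite -[bout Y i]gK fo lo.
Qed.

Lemma series_vertex_deletion F1 F2 X Y : minors_Pk F1 -> minors_Pk F2 ->
  bseries F1 F2 X -> vertex_deletion X Y ->
  exists F1' F2', [/\ minors_Pk F1', minors_Pk F2' & bseries F1' F2' Y].
Proof.
move=> mF1 mF2 [phi [gl li lo]] [w [hwi [hwo [f [finj frange fE fi fo]]]]].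
have {}gl : glued F1 F2 X (label_rel (bout F1) (bin F2)) phi by [].
case: (pickP (fun i => phi (inl (bout F1 i)) == w)) => [i0 /eqP h0 | nout].
  exact: series_vertex_deletion_glued mF1 mF2 gl li lo hwi finj frange fE fi fo h0.
have [surj ker _] := gl; have [[z | z] zw] := surj w; rewrite -zw in frange.
  have ho i : bout F1 i != z by apply: contraFneq (nout i) => ->; rewrite zw.
  have hi i : bin F1 i != z by apply: contraNneq (hwi i) => e; rewrite li e zw.
  have [psi gl' fpsi] := glued_del_vertexL (l1' := bout (del_vertex hi ho)) gl (fun=> erefl)
    finj frange fE.
  exists (del_vertex hi ho), F2; split => //.
    exact: minors_Pk_minor mF1 (bminor_del_vertex hi ho).
  by exists psi; split => // i; apply: finj; rewrite fpsi ?fi ?fo ?li ?lo.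
have hi i : bin F2 i != z.
  apply: contraFneq (nout i) => e; rewrite -zw -e; apply/eqP/ker/connect1.
  exact: (label_relP (bout F1) (bin F2) i).1.
have ho i : bout F2 i != z by apply: contraNneq (hwo i) => e; rewrite lo e zw.
have [psi gl' fpsi] := glued_del_vertexR (l2' := bin (del_vertex hi ho)) gl (fun=> erefl)
  finj frange fE.
exists F1, (del_vertex hi ho); split => //.
  exact: minors_Pk_minor mF2 (bminor_del_vertex hi ho).
by exists psi; split => // i; apply: finj; rewrite fpsi ?fi ?fo ?li ?lo.
Qed.

Lemma minors_Pk_series F1 F2 G : minors_Pk F1 -> minors_Pk F2 -> bseries F1 F2 G -> minors_Pk G.
Proof.
move=> mF1 mF2 F12G.
pose P X := exists F1 F2, [/\ minors_Pk F1, minors_Pk F2 & bseries F1 F2 X].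
apply: (minor_stable_minors_Pk (P := P)); last by exists F1, F2.
- by move=> X [A [B [mA mB s]]]; exact: Pk_series (minors_Pk_Pk mA) (minors_Pk_Pk mB) s.
- by move=> X Y [A [B [mA mB s]]] e; exists A, B; split => //; exact: composed_iso s e.
- move=> X Y [A [B [mA mB s]]] e; have [kl [kr c]] := composed_edge_deletion s e.
  exists (restrict A kl), (restrict B kr); split => //.
  - exact: minors_Pk_minor mA (restrict_minor _).
  - exact: minors_Pk_minor mB (restrict_minor _).
- by move=> X Y [A [B [mA mB s]]] e; exact: series_vertex_deletion mA mB s e.
- move=> X Y [A [B [mA mB s]]] e.
  case: (composed_contraction (s : composed _ _ (label_rel (bout A) (bin B)) _ _ _) e)
    => -[x [y [hxy [exy c]]]].
    by exists (contract hxy), B; split => //; exact: minors_Pk_minor mA (bminor_contract hxy exy).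
  by exists A, (contract hxy); split => //; exact: minors_Pk_minor mB (bminor_contract hxy exy).
Qed.

End Series.

Section Permutation.
Variable k : nat.
Implicit Types F G X Y : bgraph k.

Definition relabel X (li lo : 'I_k -> bvert X) : bgraph k := BGraph (bvert X) (badj X) li lo.

Lemma edge_relabel X li lo x y : edge (@relabel X li lo) x y = edge X x y.
Proof. by []. Qed.

Lemma perm_iso F s X Y : bperm F s X -> bg_iso X Y -> bperm F s Y.
Proof.
case=> f0 [f0bij f0E li lo] [f [fbij fE fi fo]]; exists (f \o f0); split.
- exact: bij_comp fbij f0bij.
- by move=> x y; rewrite /= fE f0E.
- by move=> i; rewrite -fi li.
- by move=> i; rewrite -fo lo.
Qed.

Lemma perm_edge_deletion F s X Y : bperm F s X -> edge_deletion X Y ->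
  exists2 F', edge_deletion F F' & bperm F' s Y.
Proof.
case=> f0 [f0bij f0E li lo] [a [b [eab [f [fbij fE fi fo]]]]].
have [g0 f0K g0K] := f0bij; have f0inj := can_inj f0K.
exists (relabel (fun i => f (f0 (bin F i))) (fun i => f (f0 (bout F i)))).
  exists (g0 a), (g0 b); split; first by rewrite -f0E !g0K.
  exists (f \o f0); split => //; first exact: bij_comp fbij f0bij.
  by move=> x y; rewrite edge_relabel /= fE f0E -[a]g0K -[b]g0K /same_pair !(inj_eq f0inj) !g0K.
exists id; split => //; first by exists id.
- by move=> i; rewrite -fi li /wlab; case: split.
- by move=> i; rewrite -fo lo /wlab; case: split.
Qed.

Lemma perm_vertex_deletion F s X Y : bperm F s X -> vertex_deletion X Y ->
  exists2 F', vertex_deletion F F' & bperm F' s Y.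
Proof.
case=> f0 [f0bij f0E li lo] [w [hwi [hwo [f [finj frange fE fi fo]]]]].
have [g0 f0K g0K] := f0bij; have f0inj := can_inj f0K.
have wX j : wlab X j = f0 (wlab F (s j)).
  by apply: (wlab_eq (h := fun j => f0 (wlab F (s j)))).
have nw j : f0 (wlab F j) != w.
  by rewrite -(permKV s j) -wX; exact: (wlab_ind (P := fun v => v != w)).
have ex j : exists u, f u == f0 (wlab F j) by have [u <-] := (frange _).1 (nw j); exists u.
pose lab j := xchoose (ex j).
have flab j : f (lab j) = f0 (wlab F j) by apply/eqP/(xchooseP (ex j)).
exists (relabel (fun i => lab (lshift k i)) (fun i => lab (rshift k i))).
  exists (g0 w); split.
    by move=> i; apply: contra_neq (nw (lshift k i)) => e; rewrite wlab_lshift e g0K.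
  split.
    by move=> i; apply: contra_neq (nw (rshift k i)) => e; rewrite wlab_rshift e g0K.
  exists (g0 \o f); split.
  - by move=> x y /(can_inj g0K) /finj.
  - move=> y; rewrite -(inj_eq f0inj) g0K (frange (f0 y)).
    by split=> -[u fu]; exists u; rewrite /= ?fu ?f0K // -fu g0K.
  - by move=> x y; rewrite -f0E !g0K fE.
  - by move=> i; rewrite /= flab wlab_lshift f0K.
  - by move=> i; rewrite /= flab wlab_rshift f0K.
exists id; split => //; first by exists id.
- move=> i; apply: finj; rewrite fi li /wlab /=.
  by case: split => j; rewrite flab ?wlab_lshift ?wlab_rshift.
- move=> i; apply: finj; rewrite fo lo /wlab /=.
  by case: split => j; rewrite flab ?wlab_lshift ?wlab_rshift.
Qed.

Lemma perm_edge_contraction F s X Y : bperm F s X -> edge_contraction X Y ->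
  exists2 F', edge_contraction F F' & bperm F' s Y.
Proof.
case=> f0 [f0bij f0E li lo] [a [b [eab [g [gsurj gab gker gE [gi go]]]]]].
have [g0 f0K g0K] := f0bij; have f0inj := can_inj f0K.
exists (relabel (fun i => g (f0 (bin F i))) (fun i => g (f0 (bout F i)))).
  exists (g0 a), (g0 b); split; first by rewrite -f0E !g0K.
  exists (g \o f0); split => //=.
  - by move=> p; have [x <-] := gsurj p; exists (g0 x); rewrite /= g0K.
  - by rewrite !g0K.
  - move=> x y /gker [/f0inj -> | [xab yab]]; first by left.
    by right; split; [case: xab | case: yab] => <-; rewrite f0K; [left | right | left | right].
  - move=> p q; rewrite edge_relabel gE; split.
      case=> npq [x [y [xp yq exy]]]; subst p q; split => //.
      by exists (g0 x), (g0 y); rewrite -f0E !g0K.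
    case=> npq [x [y [xp yq exy]]]; subst p q; split => //.
    by exists (f0 x), (f0 y); rewrite f0E.
exists id; split => //; first by exists id.
- by move=> i; rewrite gi li /wlab; case: split.
- by move=> i; rewrite go lo /wlab; case: split.
Qed.

Lemma minors_Pk_perm F s G : minors_Pk F -> in_cyclic k s -> bperm F s G -> minors_Pk G.
Proof.
move=> mF cs FG; pose P X := exists2 F, minors_Pk F & bperm F s X.
apply: (minor_stable_minors_Pk (P := P)); last by exists F.
- by move=> X [F' mF' p]; exact: Pk_perm (minors_Pk_Pk mF') cs p.
- by move=> X Y [F' mF' p] e; exists F' => //; exact: perm_iso p e.
- move=> X Y [F' mF' p] /(perm_edge_deletion p) [F'' e p'].
  by exists F'' => //; exact: minors_Pk_minor mF' (bminor_edel _ _ _ (bminor_refl _) e).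
- move=> X Y [F' mF' p] /(perm_vertex_deletion p) [F'' e p'].
  by exists F'' => //; exact: minors_Pk_minor mF' (bminor_vdel _ _ _ (bminor_refl _) e).
- move=> X Y [F' mF' p] /(perm_edge_contraction p) [F'' e p'].
  by exists F'' => //; exact: minors_Pk_minor mF' (bminor_contr _ _ _ (bminor_refl _) e).
Qed.

End Permutation.

Theorem lemma4p8 (k : nat) (F G : bgraph k) :
  Pk F -> bminor F G -> Pk G.
Proof.
move=> PF; suff: minors_Pk F by apply.
elim: PF => {F G} [F /minors_Pk_Q // | F F' G _ mF _ mF' | F Q G _ mF qQ | F s G _ mF cs].
- exact: minors_Pk_series mF mF'.
- exact: minors_Pk_parallel mF qQ.
- exact: minors_Pk_perm mF cs.
Qed.
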